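(* Let $n\ge 4$ and let $D_n$ be the tree on vertex set $\{1,2,\ldots,n\}$ whose edges are $\{1,3\}$, $\{2,3\}$ and $\{i,i+1\}$ for $3\le i\le n-1$. Let $A$ be its adjacency matrix, $e$ the all-ones vector of length $n$, $W(D_n)=[e,Ae,\ldots,A^{n-1}e]$, and let $\hat W(D_n)$ be the $(n-1)\times(n-1)$ matrix obtained from $W(D_n)$ by deleting the first row and the last column. Then: (i) if $4\nmid n$, then $\det \hat W(D_n)=\pm 2^{\lfloor n/2\rfloor-1}$; (ii) if $4\mid n$, then $\operatorname{rank}\hat W(D_n)=n-2$.
   Context: $D_n$ is the Dynkin graph: the path of order $n-1$ with a pendant edge added at its second vertex (here the path is $1,3,4,\ldots,n$ and vertex $2$ is the pendant vertex attached to vertex $3$). *)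

From mathcomp Require Import all_boot all_order all_algebra.
Set Implicit Arguments. Unset Strict Implicit. Unset Printing Implicit Defensive.
Import GRing.Theory Num.Theory.
Local Open Scope ring_scope.

(* Vertices 1..n of the paper are represented by 'I_n, vertex k+1 <-> index k.
   Edges of D_n (paper): {1,3}, {2,3}, {i,i+1} for 3 <= i <= n-1.
   0-based: {0,2}, {1,2}, {i,i+1} for 2 <= i <= n-2. *)
Definition Dedge (i j : nat) : bool :=
  [|| (i == 0%N) && (j == 2%N), (i == 1%N) && (j == 2%N)
    | (2 <= i)%N && (j == i.+1)].

Definition Dadj (R : nzRingType) (n : nat) : 'M[R]_n :=
  \matrix_(i < n, j < n) (if Dedge i j || Dedge j i then 1 else 0).

Definition Wmat (R : nzRingType) (n : nat) : 'M[R]_n :=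
  \matrix_(i < n, j < n) ((Dadj R n ^+ j) *m const_mx 1) i (@ord0 0).

(* entry (i,j) of W(D_n) with nat indices (0 outside the range, never used) *)
Definition Went (R : nzRingType) (n : nat) (i j : nat) : R :=
  match @insub nat (fun k => k < n)%N _ i, @insub nat (fun k => k < n)%N _ j with
  | Some i', Some j' => Wmat R n (i' : 'I_n) (j' : 'I_n)
  | _, _ => 0
  end.

Definition What (R : nzRingType) (n : nat) : 'M[R]_(n.-1) :=
  \matrix_(i < n.-1, j < n.-1) Went R n i.+1 j.

From mathcomp Require Import all_boot all_order all_algebra.
From mathcomp Require Import perm zify ring.
Set Implicit Arguments.
Unset Strict Implicit.
Unset Printing Implicit Defensive.
Import GRing.Theory Num.Theory.
Local Open Scope ring_scope.

(* Write n = r + 2 and A for the adjacency matrix of D_n.  Replacing the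
   Krylov columns A^j e by V_j(A) e, for the Vieta-Lucas polynomials V_0 = 2,
   V_1 = x, V_{j+2} = x V_{j+1} - V_j (with V_0 replaced by 1, so that the change
   of basis is unitriangular), changes neither determinant nor rank.  On the path
   of D_n, V_j(A) acts as the sum of the j-th forward and backward shifts, so
   V_j(A) e has explicit small entries.  Subtracting consecutive columns and
   moving the last one to the front turns the row of a leaf into (1, 0, ..., 0)
   and leaves F_r(0, 0) = [Fmx r 0 0] in the corner.  Clearing one column and
   permuting splits F_{r+2}(a, b) into a 2 x 2 block of determinant -2 and
   F_r(1 - b, a).  Hence det F_r(a, b) is 2^(r/2) up to sign times an affine
   function of (a, b) depending on r mod 4, equal to 1 at (0, 0) unless
   4 | r + 2; in that case two steps take F(a, a) to F(1 - a, 1 - a), and the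
   recursion ends at F_2(a, a), of rank 1. *)

Definition pm_eq {R : zmodType} (x y : R) := x = y \/ x = - y.

Section PmEq.
Variable R : nzRingType.
Implicit Types x y z w : R.

Lemma pm_eq_refl x : pm_eq x x.
Proof. by left. Qed.

Lemma pm_eq_sym x y : pm_eq x y -> pm_eq y x.
Proof. by case=> ->; [left | right; rewrite opprK]. Qed.

Lemma pm_eq_trans x y z : pm_eq x y -> pm_eq y z -> pm_eq x z.
Proof. by case=> -> [] ->; rewrite ?opprK; [left | right | right | left]. Qed.

Lemma pm_eqNr x y : pm_eq x (- y) -> pm_eq x y.
Proof. by case=> ->; [right | left; rewrite opprK]. Qed.

Lemma pm_eqM x y z w : pm_eq x y -> pm_eq z w -> pm_eq (x * z) (y * w).
Proof.
by case=> -> [] ->; rewrite ?mulrN ?mulNr ?opprK; [left | right | right | left].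
Qed.

End PmEq.

Lemma sum_ord_delta (R : nzRingType) n (F : nat -> R) c :
  \sum_(l < n) F l * (l == c :> nat)%:R = if (c < n)%N then F c else 0.
Proof.
transitivity (\sum_(l < n | l == c :> nat) F l); last exact: big_ord1_eq.
rewrite [RHS]big_mkcond; apply: eq_bigr => l _.
by case: eqP; rewrite ?mulr1 ?mulr0.
Qed.

Lemma det_mx22 (R : comNzRingType) (f : nat -> nat -> R) :
  \det (\matrix_(i < 2, j < 2) f i j) = f 0%N 0%N * f 1%N 1%N - f 0%N 1%N * f 1%N 0%N.
Proof.
rewrite (expand_det_row _ 0) !big_ord_recl big_ord0 /cofactor !det_mx11 !mxE /=.
by rewrite /bump /=; ring.
Qed.

Lemma det_mx33 (R : comNzRingType) (f : nat -> nat -> R) :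
  \det (\matrix_(i < 3, j < 3) f i j) =
  f 0%N 0%N * (f 1%N 1%N * f 2%N 2%N - f 1%N 2%N * f 2%N 1%N)
  - f 0%N 1%N * (f 1%N 0%N * f 2%N 2%N - f 1%N 2%N * f 2%N 0%N)
  + f 0%N 2%N * (f 1%N 0%N * f 2%N 1%N - f 1%N 1%N * f 2%N 0%N).
Proof.
rewrite (expand_det_row _ 0) !big_ord_recl big_ord0 /cofactor.
rewrite !(expand_det_row _ 0) !big_ord_recl !big_ord0 /cofactor !det_mx11 !mxE /=.
by rewrite /bump /=; ring.
Qed.

Section SignEquiv.
Variable R : comNzRingType.

Definition sign_equiv n (M N : 'M[R]_n) :=
  exists P Q : 'M[R]_n, [/\ pm_eq (\det P) 1, pm_eq (\det Q) 1 & N = P *m M *m Q].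

Lemma sign_equiv_trans n (M N L : 'M[R]_n) :
  sign_equiv M N -> sign_equiv N L -> sign_equiv M L.
Proof.
move=> [P [Q [dP dQ ->]]] [P' [Q' [dP' dQ' ->]]].
exists (P' *m P), (Q *m Q'); rewrite !det_mulmx !mulmxA.
by split=> //; rewrite -[X in pm_eq _ X]mulr1; apply: pm_eqM.
Qed.

Lemma det_sign_equiv n (M N : 'M[R]_n) : sign_equiv M N -> pm_eq (\det N) (\det M).
Proof.
move=> [P [Q [dP dQ ->]]]; rewrite !det_mulmx.
rewrite -[X in pm_eq _ X]mul1r -[X in pm_eq _ X]mulr1.
by apply: pm_eqM => //; apply: pm_eqM => //; apply: pm_eq_refl.
Qed.

Lemma sign_equiv_mulmx n (M E : 'M[R]_n) : pm_eq (\det E) 1 -> sign_equiv M (M *m E).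
Proof. by move=> dE; exists 1%:M, E; rewrite det1 mul1mx; split=> //; left. Qed.

Lemma det_unitrig n (E : 'M[R]_n) :
  is_trig_mx E -> (forall i, E i i = 1) -> \det E = 1.
Proof. by move=> /det_trig-> E1; rewrite big1. Qed.

Lemma sign_equiv_reindex n (f : nat -> nat -> R) (rho gam : nat -> nat) :
  {homo rho : x / (x < n)%N} -> {in gtn n &, injective rho} ->
  {homo gam : x / (x < n)%N} -> {in gtn n &, injective gam} ->
  sign_equiv (\matrix_(i < n, j < n) f i j) (\matrix_(i < n, j < n) f (rho i) (gam j)).
Proof.
move=> rhoN rhoI gamN gamI.
pose s_ (i : 'I_n) : 'I_n := Ordinal (rhoN i (ltn_ord i)).
pose t_ (i : 'I_n) : 'I_n := Ordinal (gamN i (ltn_ord i)).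
have sI : injective s_.
  by move=> i j [/rhoI]; rewrite !inE => /(_ (ltn_ord i) (ltn_ord j)) /val_inj.
have tI : injective t_.
  by move=> i j [/gamI]; rewrite !inE => /(_ (ltn_ord i) (ltn_ord j)) /val_inj.
have sign_perm (u : 'S_n) : pm_eq (\det (perm_mx u : 'M[R]_n)) 1.
  by rewrite det_perm; case: (odd_perm u); [right | left].
exists (perm_mx (perm sI)), (perm_mx (perm tI)^-1); split; rewrite ?sign_perm //.
by rewrite -row_permE -col_permE; apply/matrixP => i j; rewrite !mxE !permE.
Qed.

Lemma mx_nat_lblock p q (h : nat -> nat -> R) :
  (forall i j, (i < p)%N -> (j < q)%N -> h i (p + j)%N = 0) ->
  \matrix_(i < p + q, j < p + q) h i j =
  block_mx (\matrix_(i < p, j < p) h i j) 0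
           (\matrix_(i < q, j < p) h (p + i)%N j) (\matrix_(i < q, j < q) h (p + i)%N (p + j)%N).
Proof.
move=> h0; rewrite -[LHS]submxK; congr block_mx; apply/matrixP => i j; rewrite !mxE //=.
exact: h0.
Qed.

End SignEquiv.

Section SignEquivRank.
Variable F : fieldType.

Lemma mxrank_sign_equiv n (M N : 'M[F]_n) : sign_equiv M N -> \rank N = \rank M.
Proof.
have unit_pm (P : 'M[F]_n) : pm_eq (\det P) 1 -> P \in unitmx.
  by rewrite unitmxE => -[] ->; rewrite ?unitrN unitr1.
move=> [P [Q [/unit_pm uP /unit_pm uQ ->]]].
by rewrite mxrankMfree ?row_free_unit // eqmxMfull ?row_full_unit.
Qed.

Lemma mxrank_lblock_unit p q (A : 'M[F]_p) (C : 'M[F]_(q, p)) (D : 'M[F]_q) :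
  A \in unitmx -> \rank (block_mx A 0 C D) = (p + \rank D)%N.
Proof.
move=> uA.
have -> : block_mx A 0 C D = block_mx 1%:M 0 (C *m invmx A) 1%:M *m block_mx A 0 0 D.
  by rewrite mulmx_block !mulmx0 !mul0mx !mul1mx !addr0 !add0r -mulmxA mulVmx ?mulmx1.
rewrite eqmxMfull ?rank_diag_block_mx ?(mxrank_unit uA) //.
by rewrite row_full_unit unitmxE det_lblock !det1 mulr1 unitr1.
Qed.

End SignEquivRank.

(* Decide every nat test in the goal that lia can settle from the context and
   case-split on the others, innermost first (tests whose operands still contain
   a conditional are postponed); equations [x == c] then substitute for x. *)
Ltac eval_nat_tests :=
  repeat match goal with
  | |- context [ (?x == ?y)%N ] =>
      first [ have -> : (x == y)%N = true by lia | have -> : (x == y)%N = false by lia ]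
  | |- context [ (?x <= ?y)%N ] =>
      first [ have -> : (x <= y)%N = true by lia | have -> : (x <= y)%N = false by lia ]
  end.

Ltac if_free t := lazymatch t with context [if _ then _ else _] => fail | _ => idtac end.

Ltac split_nat_tests :=
  eval_nat_tests; try match goal with
  | |- context [ (?x == ?y)%N ] =>
      if_free x; if_free y;
      let E := fresh "E" in case E : (x == y)%N; split_nat_tests
  | |- context [ (?x <= ?y)%N ] =>
      if_free x; if_free y;
      let E := fresh "E" in case E : (x <= y)%N; split_nat_tests
  end.

Ltac nat_cases :=
  split_nat_tests;
  repeat match goal with
  | E : (?x == _)%N = true |- _ => is_var x; move/eqP: E => E; subst x
  end;
  rewrite /=.

Section Fmx.
Variable R : comNzRingType.
Implicit Types a b : R.

Definition Fentry r a b (k l : nat) : R :=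
  if l == 0%N then (if k == 0%N then a + b else if k == r.-1 then a - b else 1)
  else (k + l == r.-1)%:R + (k + l == r)%:R + (k.+1 == l)%:R - (k == l)%:R.

Definition Fmx r a b : 'M[R]_r := \matrix_(k, l) Fentry r a b k l.

Section Reduction.
Variables (r : nat) (a b : R).
Hypothesis r_ge2 : (2 <= r)%N.

Definition Fmx_elim : 'M[R]_r.+2 :=
  \matrix_(l, j) ((l == j :> nat)%:R
                  - (j == 0 :> nat)%:R * (a * (l == 1 :> nat)%:R + b * (l == r.+1 :> nat)%:R)).

Definition Fmx_reduced (k l : nat) : R :=
  Fentry r.+2 a b k l
  - (l == 0%N)%:R * (a * Fentry r.+2 a b k 1 + b * Fentry r.+2 a b k r.+1).

Lemma det_Fmx_elim : \det Fmx_elim = 1.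
Proof.
apply: det_unitrig => [|i]; last by rewrite mxE; nat_cases; ring.
by apply/is_trig_mxP => i j lt_ij; rewrite mxE; nat_cases; ring.
Qed.

Lemma Fmx_elimE : Fmx r.+2 a b *m Fmx_elim = \matrix_(k, l) Fmx_reduced k l.
Proof.
apply/matrixP => k l; rewrite !mxE /Fmx_reduced.
under eq_bigr => m _ do rewrite !mxE mulrBr mulrCA mulrDr (mulrCA _ a) (mulrCA _ b).
rewrite sumrB -mulr_sumr big_split -!mulr_sumr /=.
by rewrite !(sum_ord_delta _ (Fentry r.+2 a b k)) ltn_ord ltnSn.
Qed.

Definition Fmx_row_perm (x : nat) :=
  if x == 0%N then 0%N else if x == 1%N then r.+1 else x.-1.

Definition Fmx_col_perm (x : nat) :=
  if x == 0%N then 1%N else if x == 1%N then r.+1 else if x == 2%N then 0%N else x.-1.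

(* After clearing column 0 with columns 1 and r + 1, rows 0, r + 1 meet the
   other columns only in zeros. *)
Lemma Fmx_reduce :
  exists (B : 'M[R]_2) (C : 'M[R]_(r, 2)),
    \det B = - 2 /\ sign_equiv (Fmx r.+2 a b) (block_mx B 0 C (Fmx r (1 - b) a)).
Proof.
pose G k l := Fmx_reduced (Fmx_row_perm k) (Fmx_col_perm l).
have elim_col0 := sign_equiv_mulmx (Fmx r.+2 a b) (or_introl det_Fmx_elim).
rewrite Fmx_elimE in elim_col0.
have reorder : sign_equiv (\matrix_(k < r.+2, l < r.+2) Fmx_reduced k l)
                          (\matrix_(k < r.+2, l < r.+2) G k l).
  apply: sign_equiv_reindex => [x|x y|x|x y];
    rewrite ?inE /Fmx_row_perm /Fmx_col_perm /=; repeat case: ifP; lia.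
rewrite (@mx_nat_lblock _ 2 r G) in reorder; last first.
  move=> [|[|i]] // [|j] _ lt_jr;
    rewrite /G /Fmx_reduced /Fmx_row_perm /Fmx_col_perm /Fentry /=; nat_cases; ring.
have corner : \matrix_(i < r, j < r) G (2 + i)%N (2 + j)%N = Fmx r (1 - b) a.
  apply/matrixP => i j; rewrite !mxE /G /Fmx_reduced /Fmx_row_perm /Fmx_col_perm /Fentry /=.
  move: (ltn_ord i) (ltn_ord j); move: (i : nat) (j : nat) => i' [|j'] lt_ir lt_jr /=;
    nat_cases; ring.
rewrite corner in reorder; do 2!eexists; split; last exact: sign_equiv_trans reorder.
by rewrite (det_mx22 G) /G /Fmx_reduced /Fmx_row_perm /Fmx_col_perm /Fentry /=; nat_cases; ring.
Qed.

End Reduction.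

Lemma det_Fmx_step r a b :
  (2 <= r)%N -> pm_eq (\det (Fmx r.+2 a b)) (2 * \det (Fmx r (1 - b) a)).
Proof.
move=> /(Fmx_reduce a b) [B [C [detB /det_sign_equiv]]].
by rewrite (det_lblock B) detB mulNr => /pm_eq_sym /pm_eqNr.
Qed.

Lemma det_Fmx2 a b : \det (Fmx 2 a b) = - 2 * (a - b).
Proof. by rewrite det_mx22 /Fentry /=; ring. Qed.

Lemma det_Fmx3 a b : \det (Fmx 3 a b) = 2 * (1 - 2 * b).
Proof. by rewrite det_mx33 /Fentry /=; ring. Qed.

Lemma det_Fmx_even q a b :
  pm_eq (\det (Fmx (2 * q).+2 a b)) (2 ^+ q.+1 * (if odd q then 1 - a - b else a - b)).
Proof.
elim: q a b => [|q IHq] a b; first by rewrite det_Fmx2 expr1 mulNr; right.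
rewrite mulnS; apply: pm_eq_trans (det_Fmx_step _ _ _) _; first by lia.
rewrite exprS -mulrA /=; case: (IHq (1 - b) a) => ->;
  by case: (odd q); rewrite /=; first [left; ring | right; ring].
Qed.

Lemma det_Fmx_odd q a b :
  pm_eq (\det (Fmx (2 * q).+3 a b)) (2 ^+ q.+1 * (if odd q then 1 - 2 * a else 1 - 2 * b)).
Proof.
elim: q a b => [|q IHq] a b; first by rewrite det_Fmx3 expr1; left.
rewrite mulnS; apply: pm_eq_trans (det_Fmx_step _ _ _) _; first by lia.
rewrite exprS -mulrA /=; case: (IHq (1 - b) a) => ->;
  by case: (odd q); rewrite /=; first [left; ring | right; ring].
Qed.

End Fmx.

Section FmxRank.
Variable F : fieldType.
Hypothesis two_neq0 : (2 : F) != 0.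
Implicit Types a b : F.

Lemma mxrank_Fmx_step r a b :
  (2 <= r)%N -> \rank (Fmx r.+2 a b) = (\rank (Fmx r (1 - b) a)).+2.
Proof.
move=> /(Fmx_reduce a b) [B [C [detB /mxrank_sign_equiv <-]]].
by rewrite (@mxrank_lblock_unit _ 2 r B) // unitmxE detB unitfE oppr_eq0.
Qed.

Lemma mxrank_Fmx2_diag a : \rank (Fmx 2 a a) = 1%N.
Proof.
apply/eqP; rewrite eqn_leq; apply/andP; split.
  rewrite -ltnS ltn_neqAle rank_leq_row andbT; change (~~ row_free (Fmx 2 a a)).
  by rewrite row_free_unit unitmxE det_Fmx2 subrr mulr0 unitr0.
rewrite lt0n mxrank_eq0; apply: contra two_neq0 => /eqP/matrixP/(_ 0 1).
by rewrite !mxE /Fentry /= => entry01; apply/eqP; rewrite -entry01; ring.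
Qed.

Lemma mxrank_Fmx_diag m a : \rank (Fmx (4 * m).+2 a a) = (4 * m).+1.
Proof.
elim: m a => [|m IHm] a; first exact: mxrank_Fmx2_diag.
rewrite (_ : (4 * m.+1).+2 = (4 * m).+4.+2) ?mulnS //.
by rewrite mxrank_Fmx_step // mxrank_Fmx_step // IHm.
Qed.

End FmxRank.

Fixpoint vieta_lucas (R : nzRingType) (j : nat) : {poly R} :=
  match j with
  | 0 => 2%:P
  | 1 => 'X
  | S ((S j') as j1) => 'X * vieta_lucas R j1 - vieta_lucas R j'
  end.
Arguments vieta_lucas R j : simpl never.

Section VietaLucas.
Variable R : nzRingType.
Local Notation vieta_lucas := (vieta_lucas R).

Lemma vieta_lucasSS j : vieta_lucas j.+2 = 'X * vieta_lucas j.+1 - vieta_lucas j.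
Proof. by []. Qed.

Lemma coef_vieta_lucas_gt j k : (j < k)%N -> (vieta_lucas j)`_k = 0.
Proof.
elim/ltn_ind: j k => -[|[|j]] IH [|k] // lt_jk; first by rewrite coefC.
  by rewrite coefX; case: k lt_jk.
by rewrite vieta_lucasSS coefB coefXM /= !IH ?subr0 //; lia.
Qed.

Lemma coef_vieta_lucas_deg j : (0 < j)%N -> (vieta_lucas j)`_j = 1.
Proof.
elim: j => // -[_ _|j IH _]; first by rewrite coefX.
by rewrite vieta_lucasSS coefB coefXM /= IH // coef_vieta_lucas_gt ?subr0.
Qed.

Definition lucas_basis j : {poly R} := if j == 0%N then 1 else vieta_lucas j.

Lemma coef_lucas_basis_gt j k : (j < k)%N -> (lucas_basis j)`_k = 0.
Proof.
rewrite /lucas_basis; case: eqP => [-> | _]; last exact: coef_vieta_lucas_gt.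
by rewrite coefC; case: k.
Qed.

Lemma coef_lucas_basis_deg j : (lucas_basis j)`_j = 1.
Proof.
rewrite /lucas_basis; case: eqP => [-> | /eqP]; first by rewrite coefC.
by rewrite -lt0n; apply: coef_vieta_lucas_deg.
Qed.

Definition lucas_coef_mx n : 'M[R]_n := \matrix_(l, j) (lucas_basis j)`_l.

End VietaLucas.

Lemma det_lucas_coef_mx (R : comNzRingType) n : \det (lucas_coef_mx R n) = 1.
Proof.
rewrite -det_tr det_unitrig => [//| |i]; last by rewrite !mxE coef_lucas_basis_deg.
by apply/is_trig_mxP => i j lt_ij; rewrite !mxE coef_lucas_basis_gt.
Qed.

Lemma horner_mx_sum (R : comNzRingType) n (A : 'M[R]_n.+1) (p : {poly R}) N :
  (size p <= N)%N -> horner_mx A p = \sum_(l < N) p`_l *: A ^+ l.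
Proof.
move=> le_pN; rewrite [in LHS](_ : p = \poly_(l < N) p`_l); last first.
  apply/polyP => k; rewrite coef_poly; case: ltnP => // le_Nk.
  exact/nth_default/(leq_trans le_pN).
rewrite poly_def rmorph_sum; apply: eq_bigr => l _.
by rewrite -mul_polyC rmorphM /= horner_mx_C rmorphXn /= horner_mx_X -mulmxE mul_scalar_mx.
Qed.

Section Dn.
Variables (R : comNzRingType) (r : nat).
Hypothesis r_ge2 : (2 <= r)%N.

Definition adj_sum (g : nat -> R) (i : nat) : R :=
  if (i < 2)%N then g 2%N
  else if i == 2%N then g 0%N + g 1%N + g 3%N
  else g i.-1 + (if (i.+1 < r.+2)%N then g i.+1 else 0).

Lemma Dadj_mul_col (g : nat -> R) : Dadj R r.+2 *m \col_k g k = \col_i adj_sum g i.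
Proof.
apply/matrixP => i k; rewrite !mxE.
under eq_bigr => l _ do rewrite !mxE.
have := ltn_ord i; move: (i : nat) => {k} i lt_i.
have adjE (l : nat) : (if Dedge i l || Dedge l i then 1 else 0) =
    (i < 2)%N%:R * (l == 2%N)%:R + (i == 2%N)%:R * ((l == 0%N)%:R + (l == 1%N)%:R)
    + (2 <= i)%N%:R * (l == i.+1)%:R + (3 <= i)%N%:R * (l == i.-1)%:R :> R.
  by rewrite /Dedge; nat_cases; ring.
under eq_bigr => l _ do rewrite mulrC adjE !mulrDr ![g l * (_ * _)]mulrCA.
rewrite !big_split /= -!mulr_sumr !(sum_ord_delta _ g) /adj_sum.
by nat_cases; ring.
Qed.

(* The entries of V_j(A) e, valid for j <= r. *)
Definition lucas_vec (j i : nat) : R :=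
  if j == 0%N then 2 else if (i < 2)%N then 1
  else 2 * (i + j < r.+2)%N%:R + (i + j == r.+2)%:R + (i == j.+1)%:R.

Lemma adj_sum_lucas_vec j i : (j.+2 <= r)%N -> (i < r.+2)%N ->
  adj_sum (lucas_vec j.+1) i - lucas_vec j i = lucas_vec j.+2 i.
Proof. by move=> le_jr lt_i; rewrite /adj_sum /lucas_vec; nat_cases; ring. Qed.

Lemma horner_Dadj_vieta_lucas j : (j <= r)%N ->
  horner_mx (Dadj R r.+2) (vieta_lucas R j) *m const_mx 1 = \col_i lucas_vec j i.
Proof.
elim/ltn_ind: j => -[|[|j]] IH le_jr.
- by rewrite horner_mx_C mul_scalar_mx; apply/matrixP => i k; rewrite !mxE mulr1.
- have -> : const_mx 1 = \col_(k < r.+2) (fun _ => 1 : R) k.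
    by apply/matrixP => i k; rewrite !mxE.
  rewrite horner_mx_X (Dadj_mul_col (fun _ => 1)); apply/matrixP => i k.
  rewrite !mxE /adj_sum /lucas_vec; have := ltn_ord i; move: (i : nat) => {k} i lt_i.
  by nat_cases; ring.
rewrite vieta_lucasSS rmorphB rmorphM /= horner_mx_X -mulmxE mulmxBl -mulmxA.
rewrite !IH ?Dadj_mul_col //; try lia.
by apply/matrixP => i k; rewrite !mxE adj_sum_lucas_vec.
Qed.

Definition lucas_basis_vec j i := if j == 0%N then 1 else lucas_vec j i.

Lemma horner_Dadj_lucas_basis j : (j <= r)%N ->
  horner_mx (Dadj R r.+2) (lucas_basis R j) *m const_mx 1 = \col_i lucas_basis_vec j i.
Proof.
rewrite /lucas_basis /lucas_basis_vec; case: eqP => [_ _ | _].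
  by rewrite rmorph1 mul1mx; apply/matrixP => i k; rewrite !mxE.
exact: horner_Dadj_vieta_lucas.
Qed.

Lemma What_entry (i l : 'I_r.+1) :
  What R r.+2 i l = (Dadj R r.+2 ^+ l *m (const_mx 1 : 'cV_r.+2)) (lift ord0 i) 0.
Proof.
rewrite /What mxE /Went.
have lt_i : (i.+1 < r.+2)%N by rewrite ltnS.
have lt_l : (l < r.+2)%N by apply: ltn_trans (ltn_ord l) _.
rewrite (insubT (fun k => k < r.+2)%N lt_i) (insubT (fun k => k < r.+2)%N lt_l) /Wmat mxE.
by congr (_ _ _); apply: val_inj.
Qed.

Lemma What_mul_lucas_coef :
  What R r.+2 *m lucas_coef_mx R r.+1 = \matrix_(i, j) lucas_basis_vec j i.+1.
Proof.
apply/matrixP => i j; rewrite !mxE.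
transitivity
  ((horner_mx (Dadj R r.+2) (lucas_basis R j) *m (const_mx 1 : 'cV_r.+2)) (lift ord0 i) 0).
  rewrite (@horner_mx_sum _ _ _ _ r.+1); last first.
    by apply/leq_sizeP => k le_jk; apply/coef_lucas_basis_gt/(leq_trans (ltn_ord j)).
  rewrite mulmx_suml summxE; apply: eq_bigr => l _.
  by rewrite -scalemxAl What_entry !mxE mulrC.
by rewrite horner_Dadj_lucas_basis ?mxE //; exact: ltn_ord j.
Qed.

Definition diff_cols_mx : 'M[R]_r.+1 :=
  \matrix_(l, j) ((l == j :> nat)%:R - (l == (if j == 0 :> nat then r else j.+1) :> nat)%:R).

Definition What_reduced (k j : nat) : R :=
  lucas_basis_vec j k.+1
  - (if j == 0%N then lucas_basis_vec r k.+1
     else if (j < r)%N then lucas_basis_vec j.+1 k.+1 else 0).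

Lemma det_diff_cols_mx : \det diff_cols_mx = 1.
Proof.
apply: det_unitrig => [|i]; last by rewrite mxE; nat_cases; ring.
by apply/is_trig_mxP => i j lt_ij; rewrite mxE; nat_cases; ring.
Qed.

Lemma diff_colsE :
  \matrix_(i < r.+1, j < r.+1) lucas_basis_vec j i.+1 *m diff_cols_mx
  = \matrix_(k, j) What_reduced k j.
Proof.
apply/matrixP => k j; rewrite !mxE /What_reduced.
under eq_bigr => l _ do rewrite !mxE mulrBr.
rewrite sumrB !(sum_ord_delta _ (lucas_basis_vec^~ k.+1)) ltn_ord.
by nat_cases.
Qed.

Definition What_col_perm (x : nat) := if x == 0%N then r else x.-1.

(* Row 0 of the reduced matrix belongs to the leaf 2, where every
   V_j(A) e equals 1. *)
Lemma What_reduce :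
  exists C : 'M[R]_(r, 1), sign_equiv (What R r.+2) (block_mx 1 0 C (Fmx r 0 0)).
Proof.
pose G k l := What_reduced k (What_col_perm l).
have change_basis := sign_equiv_mulmx (What R r.+2) (or_introl (det_lucas_coef_mx R r.+1)).
have diff := sign_equiv_mulmx (\matrix_(i < r.+1, j < r.+1) lucas_basis_vec j i.+1)
                              (or_introl det_diff_cols_mx).
rewrite What_mul_lucas_coef in change_basis; rewrite diff_colsE in diff.
have reorder : sign_equiv (\matrix_(k < r.+1, l < r.+1) What_reduced k l)
                          (\matrix_(k < r.+1, l < r.+1) G k l).
  by apply: (@sign_equiv_reindex _ _ _ id) => [x|x y|x|x y];
    rewrite ?inE /What_col_perm /=; repeat case: ifP; lia.
rewrite (@mx_nat_lblock _ 1 r G) in reorder; last first.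
  move=> [|i] // j _ lt_jr; rewrite /G /What_reduced /What_col_perm /lucas_basis_vec /lucas_vec /=.
  by nat_cases; ring.
have leaf : \matrix_(i < 1, j < 1) G i j = 1.
  apply/matrixP => i j; rewrite !ord1 !mxE /G /What_reduced /What_col_perm.
  by rewrite /lucas_basis_vec /lucas_vec /=; nat_cases; ring.
have corner : \matrix_(i < r, j < r) G (1 + i)%N (1 + j)%N = Fmx r 0 0.
  apply/matrixP => i j; rewrite !mxE /G /What_reduced /What_col_perm.
  rewrite /lucas_basis_vec /lucas_vec /Fentry /=.
  move: (ltn_ord i) (ltn_ord j); move: (i : nat) (j : nat) => i' j' lt_ir lt_jr.
  by nat_cases; ring.
rewrite leaf corner in reorder; eexists.
exact: sign_equiv_trans change_basis (sign_equiv_trans diff reorder).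
Qed.

End Dn.

Lemma det_What (R : comNzRingType) r :
  (2 <= r)%N -> pm_eq (\det (What R r.+2)) (\det (Fmx r (0 : R) 0)).
Proof.
move=> /(What_reduce R) [C /det_sign_equiv].
by rewrite (det_lblock (1 : 'M[R]_1)) det1 mul1r => /pm_eq_sym.
Qed.

Lemma mxrank_What (F : fieldType) r :
  (2 <= r)%N -> \rank (What F r.+2) = (\rank (Fmx r (0 : F) 0)).+1.
Proof.
move=> /(What_reduce F) [C /mxrank_sign_equiv <-].
by rewrite (@mxrank_lblock_unit _ 1 r 1) ?unitmx1.
Qed.

Theorem theorem1p2 (n : nat) (hn : (4 <= n)%N) :
  (~~ (4 %| n)%N ->
     \det (What int n) = 2 ^+ (n./2 - 1) \/ \det (What int n) = - 2 ^+ (n./2 - 1))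
  /\ ((4 %| n)%N -> \rank (What rat n) = (n - 2)%N).
Proof.
case: n hn => [|[|r]] // r_ge2; split=> [not4 | div4].
- apply: pm_eq_trans (det_What _ r_ge2) _.
  have [q [er | [er odd_q]]] : exists q, r = (2 * q).+3 \/ r = (2 * q).+2 /\ odd q.
    by exists ((r - 2) %/ 2)%N; lia.
  + rewrite er (_ : ((2 * q).+3.+2)./2 - 1 = q.+1)%N; last by lia.
    by have := det_Fmx_odd q (0 : int) 0; rewrite if_same mulr0 subr0 mulr1.
  + rewrite er (_ : ((2 * q).+4)./2 - 1 = q.+1)%N; last by lia.
    by have := det_Fmx_even q (0 : int) 0; rewrite odd_q !subr0 mulr1.
have [m er] : exists m, r = (4 * m).+2 by exists (r %/ 4)%N; lia.
by rewrite mxrank_What // er mxrank_Fmx_diag //; lia.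
Qed.
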